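(* Let $p$ be a prime, $d\ge2$, $1\le k<d$, and write $x=(x_1,x_2)\in\mathbb{Z}_p^k\times\mathbb{Z}_p^{d-k}$. Let $A=\mathbb{Z}_p^k\times\{0\}\subseteq\mathbb{Z}_p^d$ and $B=\{0\}\times\mathbb{Z}_p^{d-k}\subseteq\mathbb{Z}_p^d$, and let $g\in L^2(\mathbb{Z}_p^d)$ with $\|g\|_2=1$. Then the Gabor system $\mathcal{G}(g,A,B)$ is an orthonormal basis of $L^2(\mathbb{Z}_p^d)$ if and only if both of the following hold: (a) for every $x_2\in\mathbb{Z}_p^{d-k}$, the function $m\mapsto\left|\sum_{x_1\in\mathbb{Z}_p^k}g(x_1,x_2)\chi(-x_1\cdot m)\right|$ is constant on $\mathbb{Z}_p^k$ (the constant may depend on $x_2$); (b) the function $x_2\mapsto\sum_{x_1\in\mathbb{Z}_p^k}|g(x_1,x_2)|^2$ is constant on $\mathbb{Z}_p^{d-k}$.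
   Context: $\mathbb{Z}_p^n$ is the $n$-dimensional vector space over the field $\mathbb{Z}_p$ ($p$ prime), $x\cdot b=\sum_i x_ib_i$, and $\chi(t)=e^{2\pi i t/p}$. $L^2(\mathbb{Z}_p^d)$ is the space of functions $\mathbb{Z}_p^d\to\mathbb{C}$ with inner product $\langle f,h\rangle=\sum_{x} f(x)\overline{h(x)}$. The Gabor system is $\mathcal{G}(g,A,B)=\{x\mapsto g(x-a)\chi(x\cdot b)\}_{a\in A,\ b\in B}$. *)

(* Z_p^n = 'rV['F_p]_n, functions valued in algC (complex algebraic numbers). *)
From HB Require Import structures.
From mathcomp Require Import all_boot all_order all_algebra all_field.
Set Implicit Arguments. Unset Strict Implicit. Unset Printing Implicit Defensive.
Import Order.TTheory GRing.Theory Num.Theory.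
Local Open Scope ring_scope.

(* e^{2 pi i / p}: p.-root (-1) is the p-th root of -1 of minimal nonnegative
   argument, namely e^{i pi / p}; its square is e^{2 pi i / p}. *)
Definition zeta (p : nat) : algC := (p.-root (-1)) ^+ 2.

Definition chi (p : nat) (t : 'F_p) : algC := zeta p ^+ (val t).

Definition dotp (p n : nat) (x b : 'rV['F_p]_n) : 'F_p := \sum_(i < n) x 0 i * b 0 i.

Definition inner (p n : nat) (f h : 'rV['F_p]_n -> algC) : algC :=
  \sum_(x : 'rV['F_p]_n) f x * (h x)^*.

Definition gabor (p n : nat) (g : 'rV['F_p]_n -> algC) (a b : 'rV['F_p]_n) :
  'rV['F_p]_n -> algC := fun x => g (x - a) * chi (dotp x b).

Definition is_ONB (p n : nat) (T : finType) (I : {set T})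
  (e : T -> 'rV['F_p]_n -> algC) : Prop :=
  (forall i j, i \in I -> j \in I -> inner (e i) (e j) = (i == j)%:R) /\
  (forall f : 'rV['F_p]_n -> algC, exists c : T -> algC,
     forall x, f x = \sum_(i in I) c i * e i x).

Definition gabor_ONB (p n : nat) (g : 'rV['F_p]_n -> algC)
  (A B : {set 'rV['F_p]_n}) : Prop :=
  is_ONB (setX A B) (fun ab => gabor g ab.1 ab.2).

Definition setA (p k l : nat) : {set 'rV['F_p]_(k + l)} :=
  [set row_mx a1 (0 : 'rV['F_p]_l) | a1 : 'rV['F_p]_k].
Definition setB (p k l : nat) : {set 'rV['F_p]_(k + l)} :=
  [set row_mx (0 : 'rV['F_p]_k) b2 | b2 : 'rV['F_p]_l].

From HB Require Import structures.
From mathcomp Require Import all_boot all_order all_algebra all_field.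
Set Implicit Arguments. Unset Strict Implicit. Unset Printing Implicit Defensive.
Import Order.TTheory GRing.Theory Num.Theory.
Local Open Scope ring_scope.

(* Let H_x2(t) = sum_y g(y + t, x2) g(y, x2)^* be the autocorrelation of the
   slice x1 |-> g(x1, x2).  Its Fourier transform in t is the squared modulus
   of the Fourier transform of the slice, so (a) says that H_x2 is supported
   at t = 0, and (b) says that H_x2(0) does not depend on x2, hence equals
   p^-l because ||g|| = 1.  The inner product of two Gabor atoms is the Fourier
   transform in x2 of H_x2(a1' - a1), so orthonormality is also equivalent to
   H_x2(t) = [t = 0] p^-l; under this condition the reproducing formula
   sum_i e_i(y)^* e_i(x) = [x = y] holds, which gives completeness. *)

Section Character.
Variable p : nat.
Hypothesis hp : prime p.

Lemma zetaXp : zeta p ^+ p = 1.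
Proof. by rewrite /zeta -exprM mulnC exprM rootCK ?prime_gt0 // sqrrN expr1n. Qed.

Lemma zeta_neq1 : zeta p != 1.
Proof.
rewrite /zeta sqrf_eq1 negb_or; apply/andP; split.
  by rewrite rootC_eq1 ?prime_gt0 // eq_sym -addr_eq0 (_ : 1 + 1 = 2%:R) // pnatr_eq0.
apply/eqP=> h; have := rootC_lt0 (-1 : algC) (prime_gt1 hp).
by rewrite h oppr_lt0 ltr01.
Qed.

Lemma chi0 : chi (0 : 'F_p) = 1.
Proof. by rewrite /chi expr0. Qed.

Lemma chiD (s t : 'F_p) : chi (s + t) = chi s * chi t.
Proof.
have val_add : val (s + t) = ((val s + val t) %% p)%N.
  by rewrite /=; congr (_ %% _)%N; exact: Fp_cast.
by rewrite /chi val_add (expr_mod _ zetaXp) exprD.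
Qed.

Lemma chi1_neq1 : chi (1 : 'F_p) != 1.
Proof. by rewrite /chi /= modn_small // expr1 zeta_neq1. Qed.

Lemma conj_chi (t : 'F_p) : (chi t)^* = chi (- t).
Proof.
have norm_zeta : `|zeta p| = 1.
  by apply/eqP; rewrite -(pexpr_eq1 (n := p)) ?prime_gt0 // -normrX zetaXp normr1.
have /esym : `|chi t| ^+ 2 = chi t * (chi t)^* by rewrite normCK.
rewrite /chi normrX norm_zeta !expr1n -/(chi t) => chi_conj.
by rewrite -[LHS]mul1r -[1](chi0) -(addNr t) chiD -mulrA chi_conj mulr1.
Qed.

End Character.

Section DotProduct.
Variables (p n : nat).
Implicit Types x y b : 'rV['F_p]_n.

Lemma dotpC x b : dotp x b = dotp b x.
Proof. by rewrite /dotp; apply: eq_bigr => i _; rewrite mulrC. Qed.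

Lemma dotpDl x y b : dotp (x + y) b = dotp x b + dotp y b.
Proof. by rewrite /dotp -big_split; apply: eq_bigr => i _; rewrite mxE mulrDl. Qed.

Lemma dotpNl x b : dotp (- x) b = - dotp x b.
Proof. by rewrite /dotp -sumrN; apply: eq_bigr => i _; rewrite mxE mulNr. Qed.

Lemma dotpBl x y b : dotp (x - y) b = dotp x b - dotp y b.
Proof. by rewrite dotpDl dotpNl. Qed.

Lemma dotpDr x y b : dotp b (x + y) = dotp b x + dotp b y.
Proof. by rewrite dotpC dotpDl -!(dotpC b). Qed.

Lemma dotpNr x b : dotp b (- x) = - dotp b x.
Proof. by rewrite dotpC dotpNl dotpC. Qed.

Lemma dotp0l b : dotp 0 b = 0.
Proof. by rewrite /dotp big1 // => i _; rewrite mxE mul0r. Qed.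

Lemma dotp0r b : dotp b 0 = 0.
Proof. by rewrite dotpC dotp0l. Qed.

End DotProduct.

Lemma dotp_row_mx p k l (x1 y1 : 'rV['F_p]_k) (x2 y2 : 'rV['F_p]_l) :
  dotp (row_mx x1 x2) (row_mx y1 y2) = dotp x1 y1 + dotp x2 y2.
Proof.
rewrite /dotp big_split_ord /=; congr (_ + _); apply: eq_bigr => i _.
  by rewrite !row_mxEl.
by rewrite !row_mxEr.
Qed.

Section FourierAnalysis.
Variables (p n : nat).
Hypothesis hp : prime p.
Implicit Types (F : 'rV['F_p]_n -> algC) (x y v : 'rV['F_p]_n).

Lemma natr_expp_neq0 : (p ^ n)%:R != 0 :> algC.
Proof. by rewrite pnatr_eq0 expn_eq0 (gtn_eqF (prime_gt0 hp)). Qed.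

Lemma sum_chi_dotp v :
  \sum_(s : 'rV['F_p]_n) chi (dotp v s) = (v == 0)%:R * (p ^ n)%:R.
Proof.
have [->|v_neq0] := eqVneq v 0.
  under eq_bigr do rewrite dotp0l chi0.
  by rewrite sumr_const card_mx card_Fp // mul1n mul1r.
rewrite mul0r.
have [i vi_neq0] : exists i, v 0 i != 0.
  apply/existsP; apply: contraNT v_neq0 => /existsPn v0; apply/eqP/rowP => j.
  by rewrite mxE; apply/eqP/negbNE/v0.
pose s0 : 'rV['F_p]_n := (v 0 i)^-1 *: delta_mx 0 i.
have dotp_s0 : dotp v s0 = 1.
  rewrite /dotp (bigD1 i) //= big1 => [|j /negbTE ji]; last by rewrite !mxE ji andbF !mulr0.
  by rewrite !mxE !eqxx mulr1 addr0 mulfV.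
(* translating s by s0 multiplies the sum by chi 1 <> 1 *)
set S := \sum_s _; have : S = S * chi (1 : 'F_p).
  rewrite [in LHS]/S (reindex_inj (addIr s0)) /= /S mulr_suml; apply: eq_bigr => s _.
  by rewrite dotpDr dotp_s0 (chiD hp).
move/eqP; rewrite -subr_eq0 -{1}(mulr1 S) -mulrBr mulf_eq0 subr_eq0 [1 == _]eq_sym.
by rewrite (negbTE (chi1_neq1 hp)) orbF => /eqP.
Qed.

Lemma sum_chi_dotp_sub x y :
  \sum_(s : 'rV['F_p]_n) chi (dotp x s) * chi (- dotp y s) = (x == y)%:R * (p ^ n)%:R.
Proof.
rewrite -subr_eq0 -sum_chi_dotp; apply: eq_bigr => s _.
by rewrite -(chiD hp) dotpBl.
Qed.

Lemma fourier_inversion F y :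
  \sum_(m : 'rV['F_p]_n) (\sum_t F t * chi (dotp t m)) * chi (- dotp y m)
  = (p ^ n)%:R * F y.
Proof.
under eq_bigr do rewrite mulr_suml.
rewrite exchange_big /=.
under eq_bigr do (under eq_bigr do rewrite -mulrA; rewrite -mulr_sumr sum_chi_dotp_sub).
rewrite (bigD1 y) //= big1 => [|t /negbTE ->]; last by rewrite mul0r mulr0.
by rewrite eqxx mul1r addr0 mulrC.
Qed.

Lemma fourier_inversionN F y :
  \sum_(m : 'rV['F_p]_n) (\sum_t F t * chi (- dotp t m)) * chi (dotp y m)
  = (p ^ n)%:R * F y.
Proof.
rewrite -fourier_inversion (reindex_inj oppr_inj); apply: eq_bigr => m _.
by rewrite dotpNr; congr (_ * _); apply: eq_bigr => t _; rewrite dotpNr opprK.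
Qed.

Lemma fourierN_const_eq_delta F C :
  (forall m, \sum_t F t * chi (- dotp t m) = C) -> forall s, F s = (s == 0)%:R * C.
Proof.
move=> FC s; apply: (mulfI natr_expp_neq0); rewrite -(fourier_inversionN F).
under eq_bigr do rewrite FC.
by rewrite -mulr_sumr sum_chi_dotp mulrC -mulrA mulrCA.
Qed.

End FourierAnalysis.

Section Slices.
Variables (p k l : nat).
Hypothesis hp : prime p.
Variable g : 'rV['F_p]_(k + l) -> algC.

Lemma sum_row_mx (F : 'rV['F_p]_(k + l) -> algC) :
  \sum_x F x = \sum_(x1 : 'rV['F_p]_k) \sum_(x2 : 'rV['F_p]_l) F (row_mx x1 x2).
Proof.
rewrite pair_bigA /=; apply: (reindex (fun q => row_mx q.1 q.2)).
exists (fun x => (lsubmx x, rsubmx x)) => [[a b] _ | x _] /=.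
  by rewrite row_mxKl row_mxKr.
by rewrite hsubmxK.
Qed.

Definition autocorr (x2 : 'rV['F_p]_l) (t : 'rV['F_p]_k) : algC :=
  \sum_(y : 'rV['F_p]_k) g (row_mx (y + t) x2) * (g (row_mx y x2))^*.

Definition slice_fourier (x2 : 'rV['F_p]_l) (m : 'rV['F_p]_k) : algC :=
  \sum_(x1 : 'rV['F_p]_k) g (row_mx x1 x2) * chi (- dotp x1 m).

Lemma autocorr0E x2 : autocorr x2 0 = \sum_(x1 : 'rV['F_p]_k) `|g (row_mx x1 x2)| ^+ 2.
Proof. by apply: eq_bigr => y _; rewrite addr0 normCK. Qed.

Lemma inner_sum_autocorr0 : inner g g = \sum_(x2 : 'rV['F_p]_l) autocorr x2 0.
Proof.
rewrite /inner sum_row_mx exchange_big /=; apply: eq_bigr => x2 _.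
by apply: eq_bigr => y _; rewrite addr0.
Qed.

Lemma sqr_norm_slice_fourier x2 m :
  `|slice_fourier x2 m| ^+ 2 = \sum_t autocorr x2 t * chi (- dotp t m).
Proof.
rewrite normCK /slice_fourier rmorph_sum /= mulr_suml.
rewrite (eq_bigr (fun x => \sum_(y : 'rV['F_p]_k) g (row_mx x x2) * chi (- dotp x m) *
   (g (row_mx y x2) * chi (- dotp y m))^*)) => [|x _]; last exact: mulr_sumr.
rewrite exchange_big /=.
transitivity (\sum_(y : 'rV['F_p]_k) \sum_(t : 'rV['F_p]_k)
   g (row_mx (y + t) x2) * (g (row_mx y x2))^* * chi (- dotp t m)).
  apply: eq_bigr => y _; rewrite (reindex_inj (addrI y)); apply: eq_bigr => t _.
  rewrite rmorphM /= conj_chi // opprK mulrACA -(chiD hp) dotpDl.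
  by rewrite opprD addrAC addNr add0r.
by rewrite exchange_big; apply: eq_bigr => t _; rewrite mulr_suml.
Qed.

Lemma slice_fourier_norm_constP x2 :
  (exists c, forall m, `|slice_fourier x2 m| = c) <->
  (forall t, autocorr x2 t = (t == 0)%:R * autocorr x2 0).
Proof.
split=> [[c c_const] | autocorr_delta].
  have autocorrE : forall s, autocorr x2 s = (s == 0)%:R * c ^+ 2.
    by apply: (fourierN_const_eq_delta hp) => m; rewrite -sqr_norm_slice_fourier c_const.
  by move=> t; rewrite autocorrE (autocorrE 0) eqxx mul1r.
have sqr_norm_const m : `|slice_fourier x2 m| ^+ 2 = autocorr x2 0.
  rewrite sqr_norm_slice_fourier (bigD1 0) //= big1 => [|t /negbTE t_neq0].
    by rewrite dotp0l oppr0 chi0 mulr1 addr0.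
  by rewrite autocorr_delta t_neq0 !mul0r.
exists `|slice_fourier x2 0| => m; apply/eqP.
by rewrite -(eqrXn2 (n := 2)) ?normr_ge0 // !sqr_norm_const.
Qed.

End Slices.

Section GaborSystem.
Variables (p k l : nat).
Hypothesis hp : prime p.
Variable g : 'rV['F_p]_(k + l) -> algC.

Local Notation I := (setX (setA p k l) (setB p k l)).
Local Notation atom a1 b2 := (gabor g (row_mx a1 0) (row_mx 0 b2)).

Lemma row_mx_eqE (a c : 'rV['F_p]_k) (b d : 'rV['F_p]_l) :
  (row_mx a b == row_mx c d) = (a == c) && (b == d).
Proof. by apply/eqP/andP => [/eq_row_mx[-> ->] | [/eqP-> /eqP->]]. Qed.

Lemma mem_setAB a1 b2 : (row_mx a1 0, row_mx 0 b2) \in I.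
Proof. by apply/setXP; split; apply/imsetP; [exists a1 | exists b2]. Qed.

Lemma sum_setAB (F : 'rV['F_p]_(k + l) * 'rV['F_p]_(k + l) -> algC) :
  \sum_(i in I) F i = \sum_(a1 : 'rV['F_p]_k) \sum_(b2 : 'rV['F_p]_l) F (row_mx a1 0, row_mx 0 b2).
Proof.
have -> : I = (fun q : 'rV['F_p]_k * 'rV['F_p]_l => (row_mx q.1 0, row_mx 0 q.2)) @: setT.
  apply/setP => -[a b]; apply/setXP/imsetP => [[/imsetP[a1 _ ->] /imsetP[b2 _ ->]] | [[a1 b2] _ [-> ->]]].
    by exists (a1, b2).
  by split; apply/imsetP; [exists a1 | exists b2].
rewrite big_imset /=; last first.
  by move=> [a1 b2] [a1' b2'] _ _ [] /eq_row_mx[-> _] /eq_row_mx[_ ->].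
by rewrite pair_bigA; apply: eq_bigl => q; rewrite inE.
Qed.

Lemma gabor_row_mx a1 b2 x1 x2 :
  atom a1 b2 (row_mx x1 x2) = g (row_mx (x1 - a1) x2) * chi (dotp x2 b2).
Proof. by rewrite /gabor opp_row_mx add_row_mx oppr0 addr0 dotp_row_mx dotp0r add0r. Qed.

Lemma inner_gabor a1 b2 a1' b2' :
  inner (atom a1 b2) (atom a1' b2')
  = \sum_(x2 : 'rV['F_p]_l) autocorr g x2 (a1' - a1) * chi (dotp x2 (b2 - b2')).
Proof.
rewrite /inner sum_row_mx exchange_big /=; apply: eq_bigr => x2 _.
rewrite mulr_suml (reindex_inj (addIr a1')); apply: eq_bigr => y _.
rewrite !gabor_row_mx rmorphM /= conj_chi // addrK mulrACA -(chiD hp).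
by rewrite -addrA dotpDr dotpNr.
Qed.

Definition autocorr_tight := forall x2 t, autocorr g x2 t = (t == 0)%:R / (p ^ l)%:R.

Lemma gabor_ONB_autocorr_tight : gabor_ONB g (setA p k l) (setB p k l) -> autocorr_tight.
Proof.
move=> [orthonormal _] y t.
have fourier_autocorr s :
    \sum_(x2 : 'rV['F_p]_l) autocorr g x2 t * chi (dotp x2 s) = ((t == 0) && (s == 0))%:R.
  have := orthonormal _ _ (mem_setAB 0 s) (mem_setAB t 0).
  by rewrite inner_gabor !subr0 xpair_eqE !row_mx_eqE !eqxx !andbT eq_sym => ->.
have := fourier_inversion hp (fun x2 => autocorr g x2 t) y.
under eq_bigr do rewrite fourier_autocorr.
rewrite (bigD1 0) //= big1 => [|s /negbTE ->]; last by rewrite andbF mul0r.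
rewrite eqxx andbT dotp0r oppr0 chi0 mulr1 addr0 => ->.
by rewrite mulrC mulKf // natr_expp_neq0.
Qed.

Lemma gabor_reproducing x y : autocorr_tight ->
  \sum_(i in I) (gabor g i.1 i.2 y)^* * gabor g i.1 i.2 x = (y == x)%:R.
Proof.
move=> tight; rewrite -(hsubmxK x) -(hsubmxK y) sum_setAB.
set x1 := lsubmx x; set x2 := rsubmx x; set y1 := lsubmx y; set y2 := rsubmx y.
transitivity (\sum_(a1 : 'rV['F_p]_k) (g (row_mx (y1 - a1) y2))^* * g (row_mx (x1 - a1) x2)
   * ((x2 == y2)%:R * (p ^ l)%:R)).
  apply: eq_bigr => a1 _; rewrite -(sum_chi_dotp_sub hp) mulr_sumr; apply: eq_bigr => b2 _ /=.
  by rewrite !gabor_row_mx rmorphM /= conj_chi // mulrACA [X in _ * X]mulrC.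
rewrite row_mx_eqE; have [<-|ne2] := eqVneq x2 y2; last first.
  by rewrite andbF big1 // => a1 _; rewrite mul0r mulr0.
rewrite andbT mul1r -mulr_suml.
transitivity (autocorr g x2 (x1 - y1) * (p ^ l)%:R).
  congr (_ * _); rewrite /autocorr (reindex_inj (can_inj (subKr y1))).
  apply: eq_bigr => z _; rewrite subKr mulrC; congr (g (row_mx _ _) * _).
  by rewrite opprB addrCA.
by rewrite tight subr_eq0 eq_sym mulfVK // natr_expp_neq0.
Qed.

Lemma autocorr_tight_gabor_ONB : autocorr_tight -> gabor_ONB g (setA p k l) (setB p k l).
Proof.
move=> tight; split.
  move=> [a b] [a' b'] /setXP[/imsetP[a1 _ ->] /imsetP[b2 _ ->]] /setXP[/imsetP[a1' _ ->] /imsetP[b2' _ ->]].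
  rewrite inner_gabor xpair_eqE !row_mx_eqE !eqxx !andbT.
  under eq_bigr do rewrite tight dotpC.
  rewrite -mulr_sumr (sum_chi_dotp hp) !subr_eq0 [a1' == _]eq_sym.
  by rewrite mulrACA mulVf ?natr_expp_neq0 // mulr1 -natrM mulnb.
move=> f; exists (fun i => inner f (gabor g i.1 i.2)) => x.
transitivity (\sum_y f y * (y == x)%:R).
  by rewrite (bigD1 x) //= big1 => [|y /negbTE ->]; rewrite ?mulr0 // eqxx mulr1 addr0.
under [RHS]eq_bigr do rewrite /inner mulr_suml.
rewrite exchange_big /=; apply: eq_bigr => y _.
by rewrite -(gabor_reproducing x y tight) mulr_sumr; apply: eq_bigr => i _; rewrite mulrA.
Qed.

End GaborSystem.

Theorem theorem1p6 (p k l : nat) (hp : prime p) (hk : (1 <= k)%N) (hl : (1 <= l)%N)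
  (g : 'rV['F_p]_(k + l) -> algC) (hg : inner g g = 1) :
  gabor_ONB g (setA p k l) (setB p k l) <->
  ((forall x2 : 'rV['F_p]_l, exists c : algC, forall m : 'rV['F_p]_k,
      `| \sum_(x1 : 'rV['F_p]_k) g (row_mx x1 x2) * chi (- dotp x1 m) | = c) /\
   (exists c : algC, forall x2 : 'rV['F_p]_l,
      \sum_(x1 : 'rV['F_p]_k) `| g (row_mx x1 x2) | ^+ 2 = c)).
Proof.
split=> [/(gabor_ONB_autocorr_tight hp) tight | [fourier_const [c energy_const]]].
  have autocorr0 x2 : autocorr g x2 0 = (p ^ l)%:R^-1 by rewrite tight eqxx mul1r.
  split=> [x2 | ].
    by apply/(slice_fourier_norm_constP hp) => t; rewrite autocorr0 tight.
  by exists (p ^ l)%:R^-1 => x2; rewrite -autocorr0E autocorr0.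
apply: (autocorr_tight_gabor_ONB hp) => x2 t.
have autocorr0 y : autocorr g y 0 = c by rewrite autocorr0E energy_const.
have c_eq : c = (p ^ l)%:R^-1.
  move: hg; rewrite inner_sum_autocorr0; under eq_bigr do rewrite autocorr0.
  rewrite sumr_const card_mx card_Fp // mul1n => c_pl.
  by apply: (mulIf (natr_expp_neq0 l hp)); rewrite mulr_natr c_pl mulVf ?natr_expp_neq0.
by rewrite ((slice_fourier_norm_constP hp g x2).1 (fourier_const x2)) autocorr0 c_eq.
Qed.
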